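(* Let $R$ be a topological ring and $M$ a locally compact left topological $R$-module that is finitely generated as an $R$-module. Then the Pontryagin dual $\widehat{M}$, with the right $R$-action $\chi^r(m)=\chi(rm)$, has the no small submodules property. In particular, for every $m\in\mathbb{N}$, $\widehat{R}^m\cong\widehat{R^m}$ has the no small submodules property, both as a left and as a right topological $R$-module.
   Context: All topological groups are Hausdorff; rings are unital. $\widehat{M}$ is the group of continuous homomorphisms $M\to\mathbb{S}^1$ with the compact-open topology. A module has the no small submodules property if some neighbourhood of $0$ contains no nonzero submodule. *)

From HB Require Import structures.
From mathcomp Require Import all_boot all_order all_algebra.
From mathcomp Require Import all_classical reals topology.
From mathcomp Require Import ring.
Set Implicit Arguments. Unset Strict Implicit. Unset Printing Implicit Defensive.
Import Order.TTheory GRing.Theory Num.Theory.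
Local Open Scope classical_set_scope.
Local Open Scope ring_scope.

HB.structure Definition FilteredAddMagma := {M of GRing.BaseAddMagma M & Filtered M M}.
HB.structure Definition TopZmod := {M of GRing.Zmodule M & Topological M}.

HB.structure Definition TopPzRing := {R of GRing.PzRing R & Topological R}.
(* Topological ring (Hausdorff by the standing convention). *)
Definition topological_ring (R : TopPzRing.type) : Prop :=
  [/\ hausdorff_space R,
      continuous (fun p : R * R => p.1 + p.2),
      continuous (fun x : R => - x) &
      continuous (fun p : R * R => p.1 * p.2)].

(* Left topological R-module (Hausdorff by the standing convention):
   the axioms are bundled as a mixin on a type that is both a left
   R-module and a topological space. *)
HB.mixin Record isTopLmod (R : TopPzRing.type) M
    & GRing.Lmodule R M & Topological M := {
  toplmod_hausdorff : hausdorff_space M ;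
  toplmod_add_continuous : continuous (fun p : M * M => p.1 + p.2) ;
  toplmod_opp_continuous : continuous (fun x : M => - x) ;
  toplmod_scale_continuous : continuous (fun p : R * M => p.1 *: p.2)
}.

HB.structure Definition TopLmod (R : TopPzRing.type) :=
  {M of GRing.Lmodule R M & Topological M & isTopLmod R M}.

From mathcomp Require Import normedtype.
Import numFieldNormedType.Exports.

Definition finitely_generated (R : pzRingType) (M : lmodType R) : Prop :=
  exists (n : nat) (v : 'I_n -> M),
    forall x : M, exists c : 'I_n -> R, x = \sum_(i < n) c i *: v i.

(* The circle group S^1 = {(a,b) in R0^2 | a^2 + b^2 = 1}, with the subspace
   topology of R0 x R0 (mathcomp-analysis's [set_type] topology), and complex
   multiplication. *)
Section Circle.
Variable R0 : realType.

Definition circle : set (R0 * R0) := [set z | z.1 ^+ 2 + z.2 ^+ 2 = 1].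
Definition S1 : topologicalType := set_type circle.

Definition cmul (z w : R0 * R0) : R0 * R0 :=
  (z.1 * w.1 - z.2 * w.2, z.1 * w.2 + z.2 * w.1).

Lemma circle_cmul (z w : R0 * R0) : circle z -> circle w -> circle (cmul z w).
Proof.
rewrite /circle /cmul /= => hz hw.
have -> : (z.1 * w.1 - z.2 * w.2) ^+ 2 + (z.1 * w.2 + z.2 * w.1) ^+ 2
        = (z.1 ^+ 2 + z.2 ^+ 2) * (w.1 ^+ 2 + w.2 ^+ 2) by ring.
by rewrite hz hw mulr1.
Qed.

Lemma circle_one : circle (1, 0).
Proof. by rewrite /circle /= expr0n /= addr0 expr1n. Qed.

Lemma circle_conj (z : R0 * R0) : circle z -> circle (z.1, - z.2).
Proof. by rewrite /circle /= sqrrN. Qed.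

Definition S1one : S1 := exist _ (1, 0) (mem_set circle_one).
Definition S1mul (z w : S1) : S1 :=
  exist _ (cmul (sval z) (sval w))
    (mem_set (circle_cmul (set_mem (svalP z)) (set_mem (svalP w)))).
Definition S1inv (z : S1) : S1 :=
  exist _ ((sval z).1, - (sval z).2) (mem_set (circle_conj (set_mem (svalP z)))).
End Circle.

(* Pontryagin dual of a topological abelian group (M, add):
   continuous homomorphisms M -> S^1, viewed inside the space
   {compact-open, M -> S1} of all maps with the compact-open topology. *)
Definition trivial_char (R0 : realType) (M : topologicalType) : {compact-open, M -> S1 R0} :=
  fun _ => S1one R0.

Definition is_character (R0 : realType) (M : topologicalType) (add : M -> M -> M)
    (chi : M -> S1 R0) : Prop :=
  continuous chi /\ forall x y, chi (add x y) = S1mul (chi x) (chi y).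

Definition dual_submodule (R : Type) (R0 : realType) (M : topologicalType)
    (add : M -> M -> M) (act : R -> M -> M) (N : set {compact-open, M -> S1 R0}) : Prop :=
  [/\ (forall chi, N chi -> is_character add chi),
      N (@trivial_char R0 M),
      (forall chi psi, N chi -> N psi -> N (fun x => S1mul (chi x) (psi x))),
      (forall chi, N chi -> N (fun x => S1inv (chi x))) &
      (forall r chi, N chi -> N (fun x => chi (act r x)))].

(* Neighbourhoods are taken in the
   compact-open topology; a set U of maps contains a submodule N (of characters)
   iff U ∩ dual does, so this is the subspace-topology notion on the dual. *)
Definition dual_nss (R : Type) (R0 : realType) (M : topologicalType)
    (add : M -> M -> M) (act : R -> M -> M) : Prop :=
  exists U : set {compact-open, M -> S1 R0},
    nbhs (@trivial_char R0 M) U /\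
    forall N, dual_submodule add act N -> N `<=` U -> N = [set @trivial_char R0 M].

From HB Require Import structures.
From mathcomp Require Import all_boot all_order all_algebra.
From mathcomp Require Import all_classical reals topology normedtype.
From mathcomp Require Import ring lra.
Import Order.TTheory GRing.Theory Num.Theory.
Import numFieldNormedType.Exports.
Local Open Scope classical_set_scope.
Local Open Scope ring_scope.

(* Take for U the characters sending the finitely many generators v_i into the
   open right half-circle Re > 0.  If a submodule N lies in U and chi is in N,
   then for every r and k the character chi ((2^k r) .) is in N, so
   chi (r v_i)^(2^k) = chi ((2^k r) v_i) has positive real part for all k.
   Squaring at least doubles 1 - Re z there, hence chi (r v_i) = 1; as the
   r v_i generate M additively, chi = 1. *)

Lemma pow2_mul_bounded_eq0 (R : archiRealFieldType) (d : R) :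
  0 <= d -> (forall k, 2 ^+ k * d <= 1) -> d = 0.
Proof.
move=> d_ge0 bounded; apply/eqP; rewrite eq_le d_ge0 andbT leNgt.
apply/negP => d_gt0.
have invd_ge0 : 0 <= d^-1 by rewrite invr_ge0 ltW.
have := archi_boundP invd_ge0.
set k := Num.Def.archi_bound _ => invd_lt_k.
have k_le_2k : (k%:R : R) <= 2 ^+ k by rewrite -natrX ler_nat ltnW // ltn_expl.
have : 1 < 2 ^+ k * d.
  rewrite (lt_le_trans _ (ler_wpM2r (ltW d_gt0) k_le_2k)) //.
  by rewrite -ltr_pdivrMr // div1r.
by rewrite ltNge bounded.
Qed.

Section Circle.
Variable R0 : realType.

Lemma S1_normE (z : S1 R0) : (sval z).1 ^+ 2 + (sval z).2 ^+ 2 = 1.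
Proof. exact: set_mem (svalP z). Qed.

Lemma S1_eq1 (z : S1 R0) : (sval z).1 = 1 -> z = S1one R0.
Proof.
move: (S1_normE z); case: z => [[a b] ab_circle] /= norm_ab a1.
by apply: val_inj; rewrite /= a1 in norm_ab *; congr (_, _); nra.
Qed.

Lemma S1mul1 : S1mul (S1one R0) (S1one R0) = S1one R0.
Proof. by apply: S1_eq1; rewrite /= /cmul /=; ring. Qed.

Lemma S1mul_idem_eq1 (z : S1 R0) : S1mul z z = z -> z = S1one R0.
Proof.
move=> /(congr1 sval) /= sqr_z; apply: S1_eq1; move: sqr_z (S1_normE z).
rewrite /cmul; case: (sval z) => a b /= [re_sq im_sq] norm_ab.
have b0 : b = 0.
  have /eqP : b * (2 * a - 1) = 0 by lra.
  by rewrite mulf_eq0 => /orP[/eqP // | /eqP a_half]; nra.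
by move: re_sq norm_ab; rewrite b0 mul0r subr0 expr0n addr0 expr2; lra.
Qed.

(* 1 - Re (z^2) = 2 (1 - Re z) (1 + Re z) on the circle. *)
Lemma S1_sqr_gap (z : S1 R0) :
  0 <= (sval z).1 -> 2 * (1 - (sval z).1) <= 1 - (sval (S1mul z z)).1.
Proof.
have := S1_normE z; rewrite /= /cmul.
by case: (sval z) => a b /= norm_ab a_ge0; nra.
Qed.

Lemma S1_sqr_iter_re_gt0 (z : S1 R0) :
  (forall k, 0 < (sval (iter k (fun w => S1mul w w) z)).1) -> z = S1one R0.
Proof.
move=> re_gt0; apply: S1_eq1.
have re_le1 (w : S1 R0) : (sval w).1 <= 1 by have := S1_normE w; nra.
have gap_grows k :
    2 ^+ k * (1 - (sval z).1) <= 1 - (sval (iter k (fun w => S1mul w w) z)).1.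
  elim: k => [|k IHk]; first by rewrite expr0 mul1r.
  rewrite iterS exprS -mulrA.
  have := S1_sqr_gap _ (ltW (re_gt0 k)); lra.
suff : 1 - (sval z).1 = 0 by lra.
apply: pow2_mul_bounded_eq0; first by have := re_le1 z; lra.
by move=> k; have := gap_grows k; have := re_gt0 k; lra.
Qed.

Definition right_half_circle : set (S1 R0) := [set z | 0 < (sval z).1].

Lemma open_right_half_circle : open right_half_circle.
Proof.
have val_cont : continuous (@set_val _ (@circle R0) : S1 R0 -> (R0 * R0)%type).
  exact: initial_continuous.
rewrite (_ : right_half_circle = set_val @^-1` (fst @^-1` [set x | 0 < x])) //.
apply: open_comp => [z _|]; first exact: val_cont.
by apply: open_comp => [z _|]; [apply: cvg_fst | apply: open_gt].
Qed.

End Circle.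

Section Dual.
Variables (R0 : realType) (M : TopZmod.type).

Lemma nbhs_trivial_char_compact (K : set M) : compact K ->
  nbhs (@trivial_char R0 M)
    [set g : {compact-open, M -> S1 R0} | g @` K `<=` right_half_circle R0].
Proof.
move=> K_compact; apply: open_nbhs_nbhs; split.
  exact: compact_open_open K_compact (open_right_half_circle R0).
by move=> _ [x _ <-]; rewrite /right_half_circle /= ltr01.
Qed.

Lemma character0 (chi : M -> S1 R0) :
  {morph chi : x y / x + y >-> S1mul x y} -> chi 0 = S1one R0.
Proof. by move=> chiD; apply: S1mul_idem_eq1; rewrite -chiD addr0. Qed.

Lemma character_sum (chi : M -> S1 R0) (I : Type) (r : seq I) (P : pred I)
    (F : I -> M) :
  {morph chi : x y / x + y >-> S1mul x y} ->
  (forall i, P i -> chi (F i) = S1one R0) ->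
  chi (\sum_(i <- r | P i) F i) = S1one R0.
Proof.
move=> chiD chiF; apply: (big_ind (fun x => chi x = S1one R0)) => //.
  exact: character0.
by move=> x y chix chiy; rewrite chiD chix chiy S1mul1.
Qed.

Lemma dual_nss_of_span (R : nmodType) (act : R -> M -> M) n (v : 'I_n -> M) :
  (forall r x, act (r + r) x = act r x + act r x) ->
  (forall x, exists c : 'I_n -> R, x = \sum_(i < n) act (c i) (v i)) ->
  dual_nss R0 (fun x y : M => x + y) act.
Proof.
move=> actDl span.
exists [set g | g @` range v `<=` right_half_circle R0]; split.
  exact/nbhs_trivial_char_compact/finite_compact/finite_image/finite_finset.
move=> N [N_char N_triv _ _ N_act] N_sub.
apply/seteqP; split=> [chi Nchi|_ ->] //.
have [_ chiD] := N_char _ Nchi.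
have chi_act_gen r i : chi (act r (v i)) = S1one R0.
  apply: S1_sqr_iter_re_gt0 => k.
  have -> : iter k (fun w => S1mul w w) (chi (act r (v i)))
          = chi (act (iter k (fun s => s + s) r) (v i)).
    by elim: k => //= k ->; rewrite actDl chiD.
  by apply: (N_sub _ (N_act _ _ Nchi)); exists (v i).
apply/funext => x; have [c ->] := span x.
by apply: character_sum chiD _ => i _; apply: chi_act_gen.
Qed.

End Dual.

(* Registers the topological Z-module structure of matrices, which HB does not
   infer for [TopZmod] on its own. *)
HB.saturate matrix.

Lemma row_sum_map_delta (R : pzSemiRingType) m (g : R -> R -> R) :
  (forall a, g a 1 = a) -> (forall a, g a 0 = 0) ->
  forall x : 'rV[R]_m, x = \sum_(j < m) map_mx (g (x 0 j)) (delta_mx 0 j).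
Proof.
move=> g1 g0 x; apply/matrixP => i k.
rewrite summxE (bigD1 k) //= big1 ?addr0 => [|j j_neq_k].
  by rewrite !mxE ord1 !eqxx g1.
by rewrite !mxE ord1 eqxx eq_sym (negbTE j_neq_k) g0.
Qed.

Theorem mainTheorem17 (R : TopPzRing.type) (R0 : realType) :
  topological_ring R ->
  (forall M : TopLmod.type R,
      locally_compact [set: M] -> finitely_generated M ->
      (* dual of M with the right action chi^r(m) = chi(r m) *)
      dual_nss R0 (fun x y : M => x + y) (fun (r : R) (m : M) => r *: m))
  /\
  (locally_compact [set: R] ->
   forall m : nat,
     (* dual of R^m as a right module: chi^r(x) = chi(r x) *)
     dual_nss R0 (fun x y : 'rV[R]_m => x + y)
       (fun (r : R) (x : 'rV[R]_m) => map_mx (fun a => r * a) x)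
     /\
     (* dual of R^m as a left module: (r chi)(x) = chi(x r) *)
     dual_nss R0 (fun x y : 'rV[R]_m => x + y)
       (fun (r : R) (x : 'rV[R]_m) => map_mx (fun a => a * r) x)).
Proof.
move=> _; split=> [M _ [n [v span]] | _ m].
  by apply: (@dual_nss_of_span R0 M R _ n v) => // r x; rewrite scalerDl.
split.
  apply: (@dual_nss_of_span R0 _ R _ m (delta_mx 0)) => [r x|x].
    by apply/matrixP => i j; rewrite !mxE mulrDl.
  exists (x 0); apply: (@row_sum_map_delta R m (fun r a => r * a)).
    exact: mulr1.
  exact: mulr0.
apply: (@dual_nss_of_span R0 _ R _ m (delta_mx 0)) => [r x|x].
  by apply/matrixP => i j; rewrite !mxE mulrDr.
exists (x 0); apply: (@row_sum_map_delta R m (fun r a => a * r)).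
  exact: mul1r.
exact: mul0r.
Qed.
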